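(* Let $k\ge1$, $G=(V,E)$ an inductively $k$-independent graph with $k$-independence ordering $v_1,\dots,v_n$, $f:2^V\to\mathbb{R}_{\ge0}$ monotone submodular with $f(\emptyset)=0$, and $\beta>0$. Run algorithm PREEMPTIVE-GREEDY (described in the context), let $S_{\mathrm{out}}$ be its output and $U$ the set of all vertices ever contained in $S$ during the run. Then for every independent set $T$ of $G$, \[ f(U\cup T)-f(U)\le k(1+\beta)(1+\beta^{-1})\,f(S_{\mathrm{out}}). \]
   Context: $N(v)$ is the neighbourhood of $v$ (excluding $v$); $G$ is inductively $k$-independent with $k$-independence ordering $v_1,\dots,v_n$ if for every $i$, $G[N(v_i)\cap\{v_i,\dots,v_n\}]$ has no independent set of size more than $k$. Order $V$ by $v_1<\dots<v_n$. For $S\subseteq V$: $f_S(v)=f(S\cup\{v\})-f(S)$, and $\nu_f(S,u)=f_{S'}(u)$ where $S'=\{s\in S:s<u\}$. Algorithm PREEMPTIVE-GREEDY (parameter $\beta>0$): start with $S=\emptyset$; for $i=1,\dots,n$: let $C_i=N(v_i)\cap S$; if $f_S(v_i)\ge(1+\beta)\sum_{u\in C_i}\nu_f(S,u)$, replace $S$ by $(S\setminus C_i)\cup\{v_i\}$. Return the final $S$ as $S_{\mathrm{out}}$. *)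

From mathcomp Require Import all_boot all_order all_algebra.
Set Implicit Arguments. Unset Strict Implicit. Unset Printing Implicit Defensive.
Import Order.TTheory GRing.Theory Num.Theory.
Local Open Scope ring_scope.

Section PG.
Variables (T : finType) (R : realFieldType).

Definition simple_graph (e : rel T) := symmetric e /\ irreflexive e.

Definition nbhd (e : rel T) (v : T) : {set T} := [set u | e v u].

Definition independent (e : rel T) (I : {set T}) :=
  forall x y, x \in I -> y \in I -> ~~ e x y.

(* an ordering v_1, ..., v_n of V is a duplicate-free enumeration s of T;
   x < y in the ordering iff index x s < index y s *)
Definition vertex_ordering (s : seq T) := uniq s /\ forall x, x \in s.

Definition later (s : seq T) (v : T) : {set T} :=
  [set u | (index v s <= index u s)%N].

Definition inductively_k_independent (e : rel T) (k : nat) (s : seq T) :=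
  forall v, forall I : {set T},
    I \subset nbhd e v :&: later s v -> independent e I -> (#|I| <= k)%N.

Definition monotone (f : {set T} -> R) :=
  forall A B : {set T}, A \subset B -> f A <= f B.
Definition submodular (f : {set T} -> R) :=
  forall A B : {set T}, f (A :|: B) + f (A :&: B) <= f A + f B.
Definition nonneg (f : {set T} -> R) := forall A, 0 <= f A.

Definition marg (f : {set T} -> R) (S : {set T}) (v : T) := f (v |: S) - f S.

Definition nu (f : {set T} -> R) (s : seq T) (S : {set T}) (u : T) :=
  marg f [set x in S | (index x s < index u s)%N] u.

(* one iteration; the state is (S, U) where U accumulates every vertex
   that has ever been in S *)
Definition pg_step (e : rel T) (f : {set T} -> R) (s : seq T) (beta : R)
    (st : {set T} * {set T}) (v : T) : {set T} * {set T} :=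
  let: (S0, U0) := st in
  let C := nbhd e v :&: S0 in
  if (1 + beta) * (\sum_(u in C) nu f s S0 u) <= marg f S0 v
  then ((S0 :\: C) :|: [set v], v |: U0)
  else (S0, U0).

Definition pg_run e f s beta : {set T} * {set T} :=
  foldl (pg_step e f s beta) (set0, set0) s.

Definition pg_out e f s beta := (pg_run e f s beta).1.
Definition pg_U e f s beta := (pg_run e f s beta).2.

End PG.

From mathcomp Require Import all_boot all_order all_algebra.
From mathcomp Require Import ring lra.
Set Implicit Arguments. Unset Strict Implicit. Unset Printing Implicit Defensive.
Import Order.TTheory GRing.Theory Num.Theory.
Local Open Scope ring_scope.

(* Charge every vertex t of Tset, when it is scanned, to its neighbours C_t in
   the current solution S.  If t is rejected then
   f_U(t) <= f_S(t) < (1 + beta) * sum_(u in C_t) nu(S, u), and no u is charged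
   more than k times, since the vertices charged to u form an independent set
   of later neighbours of u.  While u stays in S its charge is at most
   k * nu(S, u), and nu(S, u) only grows as S changes, so the live charge is at
   most k * sum_(u in S) nu(S, u) = k * f(S).  When an acceptance evicts C, the
   charge of C is frozen into a dead part k * D, with D growing by
   sum_(u in C) nu(S, u); that same acceptance raises f(S) by at least beta
   times this amount, so beta * D <= f(S).  Accepted vertices lie in U and have
   f_U(t) = 0, hence
   f(U :|: T) - f(U) <= sum_(t in T) f_U(t) <= (1 + beta) * (k * D + k * f(S)). *)

Section Submodular.
Variables (V : finType) (R : realFieldType) (f : {set V} -> R).
Hypotheses (f_mono : monotone f) (f_submod : submodular f).
Implicit Types (A B C S U X : {set V}) (u v : V).

Lemma marg_mem A v : v \in A -> marg f A v = 0.
Proof. by move=> vA; rewrite /marg (setUidPr _) ?sub1set // subrr. Qed.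

Lemma marg_ge0 A v : 0 <= marg f A v.
Proof. by rewrite /marg subr_ge0; apply: f_mono; apply: subsetUr. Qed.

Lemma marg_antimono A B v : A \subset B -> marg f B v <= marg f A v.
Proof.
move=> AB; have [vB|vB] := boolP (v \in B); first by rewrite marg_mem // marg_ge0.
rewrite /marg; have := f_submod (v |: A) B.
rewrite -setUA (setUidPr AB) setIUl (setIidPl AB).
have -> : [set v] :&: B = set0.
  by apply/setP => x; rewrite !inE; case: eqVneq => // ->; rewrite (negbTE vB).
rewrite set0U; lra.
Qed.

Lemma setU_sub_le_sum_marg U A : f (U :|: A) - f U <= \sum_(t in A) marg f U t.
Proof.
have [n] := ubnP #|A|; elim: n A => // n IH A ltAn.
have [->|[t tA]] := set_0Vmem A; first by rewrite big_set0 setU0 subrr.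
rewrite (big_setD1 t tA) /=.
have -> : f (U :|: A) - f U
    = marg f (U :|: (A :\ t)) t + (f (U :|: (A :\ t)) - f U).
  by rewrite /marg setUCA setD1K //; lra.
apply: lerD; first by apply: marg_antimono; apply: subsetUl.
by apply: IH; rewrite (cardsD1 t A) tA in ltAn.
Qed.

Variable s : seq V.
Hypothesis s_total : forall x, x \in s.

Lemma eq_index x y : (index x s == index y s) = (x == y).
Proof. by apply/eqP/eqP => [/(index_inj x (s_total x) (s_total y))|->]. Qed.

Lemma nu_ge0 S u : 0 <= nu f s S u.
Proof. exact: marg_ge0. Qed.

Lemma nu_antimono S (S' : {set V}) u : S' \subset S -> nu f s S u <= nu f s S' u.
Proof.
move=> S'S; apply: marg_antimono; apply/subsetP => x.
by rewrite !inE => /andP[/(subsetP S'S) -> ->].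
Qed.

Lemma nu_setU1_later S v u :
  (index u s < index v s)%N -> nu f s (v |: S) u = nu f s S u.
Proof.
move=> uv; rewrite /nu; congr marg; apply/setP => x; rewrite !inE.
by case: eqVneq => [->|] //=; rewrite ltnNge (ltnW uv) !andbF.
Qed.

Hypothesis f0 : f set0 = 0.

Lemma sum_nu S : \sum_(u in S) nu f s S u = f S.
Proof.
have [n] := ubnP #|S|; elim: n S => // n IH S ltSn.
have [->|[x0 x0S]] := set_0Vmem S; first by rewrite big_set0 f0.
pose m := [arg max_(x > x0 in S) index x s].
have [mS m_max] : m \in S /\ forall y, y \in S -> (index y s <= index m s)%N.
  by rewrite /m; case: arg_maxnP.
have Sm : m |: (S :\ m) = S by rewrite setD1K.
have below_m : [set x in S | (index x s < index m s)%N] = S :\ m.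
  apply/setP => x; rewrite !inE ltn_neqAle eq_index.
  by case xS: (x \in S); rewrite ?andbF //= m_max // andbT.
have nu_m : nu f s S m = f S - f (S :\ m) by rewrite /nu /marg below_m Sm.
have nu_rest :
    \sum_(u in S :\ m) nu f s S u = \sum_(u in S :\ m) nu f s (S :\ m) u.
  apply: eq_bigr => u; rewrite !inE => /andP[um uS].
  by rewrite -{1}Sm nu_setU1_later // ltn_neqAle eq_index um m_max.
rewrite (big_setD1 m mS) /= nu_m nu_rest IH; first by rewrite subrK.
by rewrite (cardsD1 m S) mS in ltSn.
Qed.

Lemma setD_loss_le_sum_nu X C :
  C \subset X -> f X - f (X :\: C) <= \sum_(u in C) nu f s X u.
Proof.
move=> CX; rewrite -{1}sum_nu -(sum_nu (X :\: C)).
rewrite (big_setID (A := X) C) (setIidPr CX) -addrA gerDl subr_le0.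
by apply: ler_sum => u _; apply: nu_antimono; apply: subsetDl.
Qed.

End Submodular.

Section PreemptiveGreedy.
Variables (V : finType) (R : realFieldType) (e : rel V) (k : nat) (s : seq V).
Variables (f : {set V} -> R) (beta : R) (Tset : {set V}).
Hypotheses (e_sym : symmetric e) (s_uniq : uniq s) (s_total : forall x, x \in s).
Hypothesis e_k_indep : inductively_k_independent e k s.
Hypotheses (f_mono : monotone f) (f_submod : submodular f) (f0 : f set0 = 0).
Hypotheses (beta_gt0 : 0 < beta) (Tset_indep : independent e Tset).
Implicit Types (S U : {set V}) (Tc : V -> {set V}) (D : R).

Definition prefix_set i : {set V} := [set x | (index x s < i)%N].

Lemma prefix_setS i v : index v s = i -> prefix_set i.+1 = v |: prefix_set i.
Proof.
move=> vi; apply/setP => x; rewrite !inE ltnS leq_eqVlt -vi.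
by rewrite (eq_index s_total).
Qed.

Lemma sum_prefix_setS i v (F : V -> R) : index v s = i ->
  \sum_(t in prefix_set i.+1 | t \in Tset) F t
    = (if v \in Tset then F v else 0) + \sum_(t in prefix_set i | t \in Tset) F t.
Proof.
by move=> vi; rewrite (prefix_setS vi) !big_mkcondr big_setU1 // inE vi ltnn.
Qed.

Lemma card_charged_le u (I : {set V}) :
  I \subset Tset :&: nbhd e u :&: later s u -> (#|I| <= k)%N.
Proof.
move=> IT; apply: (e_k_indep (v := u)).
  by apply: subset_trans IT _; rewrite -setIA subsetIr.
move=> x y /(subsetP IT) + /(subsetP IT).
by rewrite !inE => /andP[/andP[xT _] _] /andP[/andP[yT _] _]; apply: Tset_indep.
Qed.

Definition charge Tc S := \sum_(u in S) #|Tc u|%:R * nu f s S u.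

(* The state (S, U) after scanning the first i vertices: Tc u is the set of
   scanned vertices of Tset charged to u, and k * D bounds the charge of the
   vertices already evicted from S. *)
Definition pg_invariant i (st : {set V} * {set V}) Tc D :=
  [/\ st.1 \subset st.2, st.2 \subset prefix_set i,
      forall u, Tc u \subset Tset :&: nbhd e u :&: later s u :&: prefix_set i,
      beta * D <= f st.1 &
      \sum_(t in prefix_set i | t \in Tset) marg f st.2 t
        <= (1 + beta) * (k%:R * D + charge Tc st.1)].

Lemma pg_invariant_card i st Tc D u :
  pg_invariant i st Tc D -> (#|Tc u| <= k)%N.
Proof.
case=> _ _ Tc_sub _ _.
exact: card_charged_le (subset_trans (Tc_sub u) (subsetIl _ _)).
Qed.

Section Step.
Variables (i : nat) (v : V) (S U : {set V}) (Tc : V -> {set V}) (D : R).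
Hypotheses (v_index : index v s = i) (inv : pg_invariant i (S, U) Tc D).

Let C := nbhd e v :&: S.
Let gain := \sum_(u in C) nu f s S u.

Let S_sub_U : S \subset U. Proof. by case: inv. Qed.
Let U_sub_prefix : U \subset prefix_set i. Proof. by case: inv. Qed.
Let prefix_sub : prefix_set i \subset prefix_set i.+1.
Proof. by rewrite (prefix_setS v_index) subsetUr. Qed.

Let U_earlier u : u \in U -> (index u s < i)%N.
Proof. by move=> /(subsetP U_sub_prefix); rewrite inE. Qed.

Let v_notin_U : v \notin U.
Proof. by apply/negP => /U_earlier; rewrite v_index ltnn. Qed.

Let v_notin_S : v \notin S.
Proof. by apply: contra v_notin_U; apply: (subsetP S_sub_U). Qed.

Let C_sub_S : C \subset S. Proof. exact: subsetIr. Qed.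

Lemma charge_evict :
  charge Tc S <= k%:R * gain + charge Tc ((S :\: C) :|: [set v]).
Proof.
rewrite /charge (big_setID (A := S) C) (setIidPr C_sub_S) setUC.
rewrite big_setU1 /= ?inE ?(negbTE v_notin_S) ?andbF // addrA.
apply: lerD.
  apply: ler_wpDr; first by rewrite mulr_ge0 ?(nu_ge0 f_mono).
  rewrite /gain mulr_sumr; apply: ler_sum => u _.
  by rewrite ler_wpM2r ?(nu_ge0 f_mono) ?ler_nat ?(pg_invariant_card u inv).
apply: ler_sum => u /setDP[uS _]; rewrite ler_wpM2l // nu_setU1_later.
  by apply: (nu_antimono f_mono f_submod); apply: subsetDl.
by rewrite v_index U_earlier // (subsetP S_sub_U).
Qed.

Lemma pg_accept_invariant :
  (1 + beta) * gain <= marg f S v ->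
  pg_invariant i.+1 ((S :\: C) :|: [set v], v |: U) Tc (D + gain).
Proof.
move=> accept; have [_ _ Tc_sub fS pending] := inv.
have loss : f (v |: S) - f ((S :\: C) :|: [set v]) <= gain.
  have -> : (S :\: C) :|: [set v] = (v |: S) :\: C.
    apply/setP => x; rewrite !inE; case: eqVneq => [->|_] /=.
      by rewrite (negbTE v_notin_S) !andbF.
    by rewrite orbF.
  have CvS : C \subset v |: S by apply: subset_trans C_sub_S (subsetUr _ _).
  have := setD_loss_le_sum_nu f_mono f_submod s_total f0 CvS.
  rewrite (eq_bigr (nu f s S)) // => u uC.
  rewrite nu_setU1_later // v_index U_earlier //.
  by rewrite (subsetP S_sub_U) ?(subsetP C_sub_S).
split => /=.
- apply/subsetP => x; rewrite !inE => /orP[/andP[_ xS]|->] //.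
  by rewrite (subsetP S_sub_U) ?orbT.
- by rewrite (prefix_setS v_index) setUS.
- by move=> u; apply: subset_trans (Tc_sub u) _; apply: setIS.
- by rewrite /marg mulrDl mul1r in accept; rewrite mulrDr; lra.
rewrite (sum_prefix_setS _ v_index) marg_mem ?setU11 // if_same add0r.
apply: le_trans (_ : _ <= \sum_(t in prefix_set i | t \in Tset) marg f U t) _.
  apply: ler_sum => t _.
  by apply: (marg_antimono f_mono f_submod); apply: subsetUr.
apply: le_trans pending _.
apply: ler_wpM2l; first by apply: addr_ge0 => //; apply: ltW.
by have := charge_evict; rewrite mulrDr; lra.
Qed.

Lemma pg_reject_invariant :
  marg f S v < (1 + beta) * gain -> exists Tc', pg_invariant i.+1 (S, U) Tc' D.
Proof.
move=> reject; have [_ _ Tc_sub fS pending] := inv.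
have U_sub_next : U \subset prefix_set i.+1.
  exact: subset_trans U_sub_prefix prefix_sub.
have Tc_sub_next u :
    Tc u \subset Tset :&: nbhd e u :&: later s u :&: prefix_set i.+1.
  by apply: subset_trans (Tc_sub u) _; apply: setIS.
have [vT|vT] := boolP (v \in Tset); last first.
  by exists Tc; split; rewrite // (sum_prefix_setS _ v_index) (negbTE vT) add0r.
pose Tc' u := if u \in C then v |: Tc u else Tc u.
have charge' : charge Tc' S = charge Tc S + gain.
  rewrite /charge !(big_setID (A := S) C) (setIidPr C_sub_S) addrAC.
  congr (_ + _).
    rewrite /gain -big_split; apply: eq_bigr => u uC /=; rewrite /Tc' uC cardsU1.
    have -> : v \notin Tc u.
      by apply/negP => /(subsetP (Tc_sub u)); rewrite !inE v_index ltnn andbF.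
    by rewrite natrD mulrDl mul1r addrC.
  by apply: eq_bigr => u /setDP[_ /negbTE uC]; rewrite /Tc' uC.
exists Tc'; split => //.
- move=> u; rewrite /Tc'; case: ifP => [uC|_]; last exact: Tc_sub_next.
  rewrite subUset Tc_sub_next andbT sub1set.
  have [evu uS] : e v u /\ u \in S by move: uC; rewrite !inE => /andP.
  by rewrite !inE vT e_sym evu v_index ltnSn ltnW ?U_earlier ?(subsetP S_sub_U).
rewrite (sum_prefix_setS _ v_index) vT charge' addrA mulrDr [X in X <= _]addrC.
apply: lerD => //; apply/ltW/(le_lt_trans _ reject).
exact: (marg_antimono f_mono f_submod).
Qed.

Lemma pg_step_invariant :
  exists Tc' D', pg_invariant i.+1 (pg_step e f s beta (S, U) v) Tc' D'.
Proof.
rewrite /pg_step -/C -/gain; case: ifP => [accept|/negbT].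
  by exists Tc, (D + gain); apply: pg_accept_invariant.
by rewrite -ltNge => /pg_reject_invariant[Tc' ?]; exists Tc', D.
Qed.

End Step.

Lemma pg_run_invariant j : (j <= size s)%N ->
  exists Tc D,
    pg_invariant j (foldl (pg_step e f s beta) (set0, set0) (take j s)) Tc D.
Proof.
elim: j => [_|j IH lt_js].
  exists (fun=> set0), 0; rewrite take0.
  split=> /= [||u||]; rewrite ?sub0set ?mulr0 ?f0 //.
  rewrite big_pred0 => [|x]; last by rewrite inE ltn0.
  by rewrite /charge big_set0 addr0 mulr0.
have x0 : V by case: (s) lt_js => // x.
have [Tc [D]] := IH (ltnW lt_js).
rewrite (take_nth x0 lt_js) foldl_rcons; case: foldl => S U inv.
by apply: pg_step_invariant inv; apply: index_uniq.
Qed.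

Lemma pg_invariant_size_bound S U Tc D : pg_invariant (size s) (S, U) Tc D ->
  f (U :|: Tset) - f U <= k%:R * (1 + beta) * (1 + beta^-1) * f S.
Proof.
move=> inv; have [/= _ _ _ fS pending] := inv.
have charge_le : charge Tc S <= k%:R * f S.
  rewrite /charge -(sum_nu s_total f0 S) mulr_sumr; apply: ler_sum => u _.
  by rewrite ler_wpM2r ?(nu_ge0 f_mono) // ler_nat (pg_invariant_card u inv).
have D_le : D <= f S / beta by rewrite ler_pdivlMr // mulrC.
have sum_all : \sum_(t in prefix_set (size s) | t \in Tset) marg f U t
    = \sum_(t in Tset) marg f U t.
  by apply: eq_bigl => t; rewrite !inE index_mem s_total.
apply: le_trans (setU_sub_le_sum_marg f_mono f_submod U Tset) _.
rewrite -sum_all; apply: le_trans pending _.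
have -> : k%:R * (1 + beta) * (1 + beta^-1) * f S
    = (1 + beta) * (k%:R * (f S / beta) + k%:R * f S) by ring.
by rewrite ler_wpM2l ?lerD ?ler_wpM2l ?ler0n // addr_ge0 // ltW.
Qed.

End PreemptiveGreedy.

Theorem lemma16 (R : realFieldType) (V : finType) (e : rel V) (k : nat)
  (s : seq V) (f : {set V} -> R) (beta : R) :
  (1 <= k)%N ->
  simple_graph e ->
  vertex_ordering s ->
  inductively_k_independent e k s ->
  monotone f -> submodular f -> nonneg f -> f set0 = 0 ->
  0 < beta ->
  forall Tset : {set V}, independent e Tset ->
    f (pg_U e f s beta :|: Tset) - f (pg_U e f s beta)
      <= k%:R * (1 + beta) * (1 + beta^-1) * f (pg_out e f s beta).
Proof.
move=> _ [e_sym _] [s_uniq s_total] e_k_indep f_mono f_submod _ f0 beta_gt0.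
move=> Tset Tset_indep; rewrite /pg_U /pg_out /pg_run.
have := pg_run_invariant e_sym s_uniq s_total e_k_indep f_mono f_submod f0
  beta_gt0 Tset_indep (leqnn (size s)).
rewrite take_size; case: foldl => S U [Tc [D]].
exact: pg_invariant_size_bound.
Qed.
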